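(* Let $X$ be a real random variable with mean zero and finite variance $\sigma^2>0$, let $X^*$ have the zero bias distribution of $X$, and suppose $X^*\leq_{\sigma,k}X+c$ for positive constants $k$ and $c$. Then for all $x\ge0$, $$\mathbb{P}(X-\mathbb{E}X\ge x)\le\exp\left(-\frac{x^2}{2(k^2+cx)}\right).$$
   Context: Zero bias transform: for $X$ with mean zero and finite variance $\sigma^2$, $X^*$ has the zero bias distribution of $X$ if $\mathbb{E}[Xf(X)]=\sigma^2\mathbb{E}[f'(X^* )]$ for all absolutely continuous $f$ for which the expectations exist. Weighted stochastic order: $U\leq_{a,b}V$ means $a^2\mathbb{E}f(U)\le b^2\mathbb{E}f(V)$ for every increasing positive function $f$ for which the expectations exist. *)

From HB Require Import structures.
From mathcomp Require Import all_boot all_order all_algebra.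
From mathcomp Require Import all_classical all_reals all_analysis.
Set Implicit Arguments. Unset Strict Implicit. Unset Printing Implicit Defensive.
Import Order.TTheory GRing.Theory Num.Theory.
Local Open Scope classical_set_scope.
Local Open Scope ring_scope.

Definition abs_continuous_on {R : realType} (f : R -> R) (a b : R) : Prop :=
  forall eps : R, 0 < eps -> exists2 delta : R, 0 < delta &
    forall (n : nat) (s : 'I_n -> R * R),
      (forall i, a <= (s i).1 /\ (s i).1 <= (s i).2 /\ (s i).2 <= b) ->
      (forall i j : 'I_n, (i < j)%N -> (s i).2 <= (s j).1) ->
      \sum_(i < n) ((s i).2 - (s i).1) < delta ->
      \sum_(i < n) `|f (s i).2 - f (s i).1| < eps.

Definition abs_continuous {R : realType} (f : R -> R) : Prop :=
  forall a b : R, a <= b -> abs_continuous_on f a b.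

(* Xs (on the probability space P') has the zero bias distribution of X (on
   P), where sigma^2 is the variance of X:
   E[X f(X)] = sigma^2 E[f'(Xs)] for every absolutely continuous f for which
   the expectations exist. *)
Definition zero_bias {R : realType} {d d' : measure_display}
  {T : measurableType d} {T' : measurableType d'}
  (P : probability T R) (X : T -> R) (sigma : R)
  (P' : probability T' R) (Xs : T' -> R) : Prop :=
  forall f : R -> R, abs_continuous f ->
    P.-integrable setT (EFin \o (fun w => X w * f (X w))) ->
    P'.-integrable setT (EFin \o (fun w => derive1 f (Xs w))) ->
    ('E_P[fun w => (X w * f (X w))%R] =
       (sigma ^+ 2)%:E * 'E_P'[fun w => (derive1 f (Xs w))%R])%E.

(* Weighted stochastic order  U <=_{a,b} V  (U on P, V on P'):
   a^2 E f(U) <= b^2 E f(V) for every increasing positive f for which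
   the expectations exist. *)
Definition weighted_le {R : realType} {d d' : measure_display}
  {T : measurableType d} {T' : measurableType d'}
  (P : probability T R) (U : T -> R) (P' : probability T' R) (V : T' -> R)
  (a b : R) : Prop :=
  forall f : R -> R, {homo f : x y / x <= y} -> (forall x, 0 < f x) ->
    P.-integrable setT (EFin \o (f \o U)) ->
    P'.-integrable setT (EFin \o (f \o V)) ->
    ((a ^+ 2)%:E * 'E_P[f \o U] <= (b ^+ 2)%:E * 'E_P'[f \o V])%E.

(* Herbst-type argument on the truncated moment generating function
   M(t) = E[exp (t min(X, x))].  Its derivative E[min(X, x) e^(t min(X, x))] is
   at most E[X F(X)], where F is e^(t y) up to x and affine beyond it; F' is
   positive, bounded and nondecreasing, so the zero bias identity and the
   weighted order give M'(t) <= sigma^2 E[F'(Xs)] <= k^2 E[F'(X + c)]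
   <= k^2 t e^(t c) M(t).  On 0 < t <= x / L, with L = k^2 + c x, one has
   k^2 e^(t c) <= L, so M(t) <= exp (L t^2 / 2) by Gronwall's inequality, and
   Chernoff's bound at t = x / L gives exp (- x^2 / (2 L)). *)

From HB Require Import structures.
From mathcomp Require Import all_boot all_order all_algebra.
From mathcomp Require Import all_classical all_reals all_analysis.
From mathcomp Require Import ring lra measurable_realfun.
Import Order.TTheory GRing.Theory Num.Theory.
Local Open Scope classical_set_scope.
Local Open Scope ring_scope.

Section secant.
Context {R : realType}.
Implicit Types (f g : R -> R) (t u v x y K L : R).

Lemma expR_secant t u v : u <= v ->
  t * expR (t * u) * (v - u) <= expR (t * v) - expR (t * u) /\
  expR (t * v) - expR (t * u) <= t * expR (t * v) * (v - u).
Proof.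
move=> uv.
have Ev : expR (t * v) = expR (t * u) * expR (t * (v - u)).
  by rewrite -expRD; congr expR; ring.
have Eu : expR (t * u) = expR (t * v) * expR (- (t * (v - u))).
  by rewrite -expRD; congr expR; ring.
have lbv : expR (t * u) * (1 + t * (v - u)) <= expR (t * u) * expR (t * (v - u)).
  by rewrite ler_pM2l ?expR_gt0 ?expR_ge1Dx.
have lbu : expR (t * v) * (1 - t * (v - u)) <= expR (t * v) * expR (- (t * (v - u))).
  by rewrite ler_pM2l ?expR_gt0 ?expR_ge1Dx.
by rewrite -Ev in lbv; rewrite -Eu in lbu; split; lra.
Qed.

Definition secant_between (f g : R -> R) : Prop :=
  forall x y, x <= y -> g x * (y - x) <= f y - f x /\ f y - f x <= g y * (y - x).

Lemma derive1_quadratic_remainder f x D K :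
  (forall y, `|f y - f x - D * (y - x)| <= K * (y - x) ^+ 2) -> derive1 f x = D.
Proof.
move=> fK; rewrite /derive1; apply: cvg_lim => //.
apply/cvgrPdist_lt => e e0.
have K1 : 0 < `|K| + 1 by rewrite ltr_pwDr.
near=> h.
have h0 : h != 0 by near: h; exists 1 => //= y _.
have hlt : `|h| < e / (`|K| + 1) by near: h; apply: dnbhs0_lt; exact: divr_gt0.
have hK := fK (h + x); rewrite addrK in hK.
have -> : D - h^-1 *: (f (h + x) - f x) = - (h^-1 * (f (h + x) - f x - D * h)).
  by rewrite /GRing.scale /=; field.
rewrite normrN normrM normfV.
have hK' : `|h|^-1 * `|f (h + x) - f x - D * h| <= K * `|h|.
  have -> : K * `|h| = `|h|^-1 * (K * h ^+ 2).
    by rewrite -real_normK ?num_real //; field; rewrite normr_eq0.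
  by rewrite ler_wpM2l // invr_ge0.
apply: (le_lt_trans hK').
have : `|h| * (`|K| + 1) < e by rewrite -ltr_pdivlMr.
have := ler_norm K; have := normr_ge0 h; nra.
Unshelve. all: end_near. Qed.

Lemma secant_between_remainder f g K : secant_between f g ->
  (forall x y, x <= y -> g y - g x <= K * (y - x)) ->
  forall x y, `|f y - f x - g x * (y - x)| <= K * (y - x) ^+ 2.
Proof.
move=> fg gK x y; have [xy|/ltW yx] := leP x y.
  have [lb ub] := fg x y xy; have dg := gK x y xy.
  have d0 : 0 <= y - x by rewrite subr_ge0.
  have : (g y - g x) * (y - x) <= K * (y - x) * (y - x) by rewrite ler_wpM2r.
  rewrite ger0_norm ?expr2; lra.
have [lb ub] := fg y x yx; have dg := gK y x yx.
have d0 : 0 <= x - y by rewrite subr_ge0.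
have : (g x - g y) * (x - y) <= K * (x - y) * (x - y) by rewrite ler_wpM2r.
rewrite ger0_norm ?expr2; nra.
Qed.

Lemma derive1_secant_between f g K : secant_between f g ->
  (forall x y, x <= y -> g y - g x <= K * (y - x)) ->
  forall x, derive1 f x = g x.
Proof.
move=> fg gK x; apply: (derive1_quadratic_remainder _ _ _ K).
exact: secant_between_remainder.
Qed.

Lemma secant_between_lipschitz f g L : secant_between f g ->
  (forall x, 0 <= g x <= L) -> forall x y, `|f y - f x| <= L * `|y - x|.
Proof.
move=> fg gL x y; wlog xy : x y / x <= y.
  by move=> H; have [/H //|/ltW/H] := leP x y; rewrite distrC (distrC y).
have [lb ub] := fg x y xy.
have /andP[gx0 gxL] := gL x; have /andP[gy0 gyL] := gL y.
have d0 : 0 <= y - x by rewrite subr_ge0.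
have f0 : 0 <= f y - f x by apply: le_trans lb; rewrite mulr_ge0.
rewrite !ger0_norm //; apply: (le_trans ub); exact: ler_wpM2r.
Qed.

Lemma lipschitz_abs_continuous f L : 0 <= L ->
  (forall x y, `|f y - f x| <= L * `|y - x|) -> abs_continuous f.
Proof.
move=> L0 fL a b _ e e0.
have L1 : 0 < L + 1 by lra.
exists (e / (L + 1)); first exact: divr_gt0.
move=> n s sab _ ssum.
apply: (@le_lt_trans _ _ (L * \sum_(i < n) ((s i).2 - (s i).1))).
  rewrite mulr_sumr; apply: ler_sum => i _.
  have [_ [s12 _]] := sab i.
  by rewrite (le_trans (fL _ _)) // ger0_norm // subr_ge0.
have : L * \sum_(i < n) ((s i).2 - (s i).1) <= L * (e / (L + 1)).
  by rewrite ler_wpM2l // ltW.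
have : L * (e / (L + 1)) < e by rewrite mulrA ltr_pdivrMr //; nra.
lra.
Qed.

End secant.

Section explin.
Context {R : realType}.
Implicit Types (t a c x y : R).

Definition explin t a y : R := expR (t * Num.min y a) * (1 + t * Num.max (y - a) 0).
Definition explin_slope t a y : R := t * expR (t * Num.min y a).

Lemma explin_secant t a : 0 <= t -> secant_between (explin t a) (explin_slope t a).
Proof.
move=> t0 x y xy; rewrite /explin /explin_slope.
have [ya|ay] := leP y a.
  have xa : x <= a by apply: le_trans ya.
  rewrite (min_l xa) !max_r ?subr_le0 // !mulr0 !addr0 !mulr1.
  exact: expR_secant.
have [ax|xa] := leP a x.
  rewrite !max_l ?subr_ge0 ?(ltW ay) //.
  by split; lra.
rewrite max_l ?subr_ge0 ?(ltW ay) //.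
rewrite max_r ?subr_le0 ?(ltW xa) // mulr0 addr0 mulr1.
have [lb ub] := expR_secant t _ _ (ltW xa).
have exa : expR (t * x) <= expR (t * a) by rewrite ler_expR ler_wpM2l // ltW.
have ya0 : 0 <= y - a by rewrite subr_ge0 ltW.
split; nra.
Qed.

Lemma explin_slope_gt0 t a y : 0 < t -> 0 < explin_slope t a y.
Proof. by move=> t0; rewrite mulr_gt0 ?expR_gt0. Qed.

Lemma explin_slope_le t a y : 0 <= t -> explin_slope t a y <= t * expR (t * a).
Proof. by move=> t0; rewrite ler_wpM2l // ler_expR ler_wpM2l // ge_min lexx orbT. Qed.

Lemma explin_slope_homo t a : 0 <= t -> {homo explin_slope t a : x y / x <= y}.
Proof. by move=> t0 x y xy; rewrite ler_wpM2l // ler_expR ler_wpM2l // le_min2. Qed.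

Lemma explin_slope_lipschitz t a x y : 0 <= t -> x <= y ->
  explin_slope t a y - explin_slope t a x <= t ^+ 2 * expR (t * a) * (y - x).
Proof.
move=> t0 xy; rewrite /explin_slope -mulrBr.
have mxy : Num.min x a <= Num.min y a by exact: le_min2.
have dmin : Num.min y a - Num.min x a <= y - x.
  by case: (leP y a) => ya; case: (leP x a) => xa; lra.
have eya : expR (t * Num.min y a) <= expR (t * a).
  by rewrite ler_expR ler_wpM2l // ge_min lexx orbT.
have [_ ub] := expR_secant t _ _ mxy.
have : expR (t * Num.min y a) * (Num.min y a - Num.min x a) <= expR (t * a) * (y - x).
  by apply: ler_pM; rewrite ?expR_ge0 ?subr_ge0.
have := expR_ge0 (t * Num.min y a); nra.
Qed.

Lemma explin_slope_shift t a c y : 0 <= t -> 0 <= c ->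
  explin_slope t a (y + c) <= t * expR (t * c) * expR (t * Num.min y a).
Proof.
move=> t0 c0; rewrite /explin_slope -mulrA ler_wpM2l // -expRD ler_expR -mulrDr.
rewrite ler_wpM2l // ge_min; case: (leP y a) => ya; first by rewrite addrC lexx.
by rewrite lerDr c0 orbT.
Qed.

Lemma derive1_explin t a y : 0 <= t -> derive1 (explin t a) y = explin_slope t a y.
Proof.
move=> t0; apply: (@derive1_secant_between _ _ _ (t ^+ 2 * expR (t * a))).
- exact: explin_secant.
- by move=> x z; exact: explin_slope_lipschitz.
Qed.

Lemma explin_abs_continuous t a : 0 < t -> abs_continuous (explin t a).
Proof.
move=> t0; apply: (@lipschitz_abs_continuous _ _ (t * expR (t * a))).
  by rewrite mulr_ge0 ?expR_ge0 ?ltW.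
apply: (@secant_between_lipschitz _ _ (explin_slope t a)).
  exact/explin_secant/ltW.
by move=> x; rewrite ltW ?explin_slope_gt0 ?explin_slope_le ?ltW.
Qed.

Lemma measurable_expR_min t a : measurable_fun [set: R] (fun y => expR (t * Num.min y a)).
Proof.
apply: measurableT_comp; first exact: measurable_expR.
apply: measurable_funM; first exact: measurable_cst.
exact: (measurable_minr (f := id) (g := cst a)).
Qed.

Lemma measurable_explin t a : measurable_fun [set: R] (explin t a).
Proof.
apply: measurable_funM; first exact: measurable_expR_min.
apply: measurable_funD; first exact: measurable_cst.
apply: measurable_funM; first exact: measurable_cst.
apply: (measurable_maxr (f := fun y => y - a) (g := cst 0)) => //.
exact: measurable_funB.
Qed.

Lemma measurable_explin_slope t a : measurable_fun [set: R] (explin_slope t a).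
Proof. by apply: measurable_funM; [exact: measurable_cst | exact: measurable_expR_min]. Qed.

Lemma explin_ge0 t a y : 0 <= t -> 0 <= explin t a y.
Proof.
by move=> t0; rewrite mulr_ge0 ?expR_ge0 // addr_ge0 // mulr_ge0 // le_max lexx orbT.
Qed.

Lemma explin_le t a y : 0 <= t -> 0 <= a -> explin t a y <= expR (t * a) * (1 + t * `|y|).
Proof.
move=> t0 a0; apply: ler_pM.
- exact: expR_ge0.
- by rewrite addr_ge0 // mulr_ge0 // le_max lexx orbT.
- by rewrite ler_expR ler_wpM2l // ge_min lexx orbT.
- rewrite lerD2l ler_wpM2l // ge_max normr_ge0 andbT.
  by rewrite (le_trans _ (ler_norm y)) // lerBlDr lerDl.
Qed.

Lemma min_expR_le_explin t a y : 0 <= t -> 0 <= a ->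
  Num.min y a * expR (t * Num.min y a) <= y * explin t a y.
Proof.
move=> t0 a0; rewrite /explin; have [ya|ay] := leP y a.
  by rewrite max_r ?subr_le0 // mulr0 addr0 mulr1.
rewrite max_l ?subr_ge0 ?(ltW ay) //.
have ya0 : 0 <= y - a by rewrite subr_ge0 ltW.
have e0 := expR_ge0 (t * a).
have : 0 <= y * (expR (t * a) * (t * (y - a))).
  by rewrite !mulr_ge0 // (le_trans a0) // ltW.
have := mulr_ge0 e0 ya0; nra.
Qed.

End explin.

Section derive_expR.
Context {R : realType}.

Lemma is_derive_expR_mulr (m t : R) :
  is_derive t 1 (fun s => expR (s * m)) (m * expR (t * m)).
Proof.
rewrite mulrC; apply: (is_derive1_comp (f := expR) (g := fun s => s * m)).
by apply: is_derive_eq; rewrite /GRing.scale /=; ring.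
Qed.

Lemma is_derive_expR_sqr (n t : R) :
  is_derive t 1 (fun s => expR (n * s ^+ 2)) (expR (n * t ^+ 2) * (2 * n * t)).
Proof.
apply: (is_derive1_comp (f := expR) (g := fun s => n * s ^+ 2)).
by apply: is_derive_eq; rewrite /GRing.scale /=; ring.
Qed.

End derive_expR.

Section gronwall.
Context {R : realType}.

Variables (f : R -> R) (L C ts : R).
Hypotheses (L0 : 0 <= L) (ts0 : 0 < ts).
Hypothesis f_derivable : forall s, 0 < s -> s <= ts -> derivable f s 1.
Hypothesis derive1_f_le : forall s, 0 < s -> s <= ts -> derive1 f s <= L * s * f s.
Hypothesis f_bounds : forall s, 0 < s -> s <= ts -> 0 <= f s <= 1 + s * C.

(* [f s * expR (- L s^2 / 2)] is nonincreasing on [0, ts] and at most [1 + s C]. *)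
Let E s := expR (- (L / 2) * s ^+ 2).
Let g := f * E.

Let is_derive_g s : 0 < s -> s <= ts ->
  is_derive s 1 g (f s *: (E s * (2 * - (L / 2) * s)) + E s *: derive1 f s).
Proof.
move=> s0 sts; apply: is_deriveM; last exact: is_derive_expR_sqr.
by apply: DeriveDef; [exact: f_derivable | rewrite derive1E].
Qed.

Let g_nonincreasing e : 0 < e -> e <= ts -> g ts <= g e.
Proof.
move=> e0 ets.
have Dg s : s \in `[e, ts] -> is_derive s 1 g
    (f s *: (E s * (2 * - (L / 2) * s)) + E s *: derive1 f s).
  by rewrite in_itv /= => /andP[es sts]; apply: is_derive_g => //; exact: lt_le_trans es.
apply: (@ler0_derive1_le_cc _ g e ts); rewrite ?in_itv /= ?lexx ?ets //.
- by move=> s /subset_itv_oo_cc/Dg[].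
- move=> s /subset_itv_oo_cc sI; rewrite derive1E; have [_ ->] := Dg s sI.
  have [s0 sts] : 0 < s /\ s <= ts.
    by move: sI; rewrite in_itv /= => /andP[es sts]; split => //; exact: lt_le_trans es.
  have Es0 : 0 < E s := expR_gt0 _.
  have := derive1_f_le _ s0 sts; rewrite /GRing.scale /=; nra.
- by apply: derivable_within_continuous => s /Dg[].
Qed.

Let g_le1 : g ts <= 1.
Proof.
apply/ler_addgt0Pr => eps eps0.
have C1 : 0 < `|C| + 1 by rewrite ltr_wpDl.
pose s := Num.min ts (eps / (`|C| + 1)).
have s0 : 0 < s by rewrite lt_min ts0 divr_gt0.
have sts : s <= ts by rewrite ge_min lexx.
have sC : s * C <= eps.
  have : s * (`|C| + 1) <= eps by rewrite -ler_pdivlMr // ge_min lexx orbT.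
  have := ler_norm C; have := ltW s0; nra.
apply: (le_trans (g_nonincreasing _ s0 sts)).
have /andP[fs0 fs1] := f_bounds _ s0 sts.
have Es1 : E s <= 1.
  by rewrite expR_le1 mulNr oppr_le0 mulr_ge0 ?divr_ge0 ?sqr_ge0.
have : f s * E s <= f s by rewrite ler_piMr.
change (f s * E s <= f s -> f s * E s <= 1 + eps); lra.
Qed.

Lemma gronwall_le_expR_sqr : f ts <= expR (L * ts ^+ 2 / 2).
Proof.
have -> : f ts = g ts * expR (L * ts ^+ 2 / 2).
  change (f ts = f ts * E ts * expR (L * ts ^+ 2 / 2)).
  by rewrite /E -mulrA -expRD (_ : _ + _ = 0) ?expR0 ?mulr1 //; field.
by rewrite -[leRHS]mul1r ler_wpM2r ?expR_ge0.
Qed.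

End gronwall.

Section integrability.
Context {R : realType} {d : measure_display} {T : measurableType d}
  (P : probability T R).

Lemma integrable_norm_le_cst (f : T -> R) B : measurable_fun setT f ->
  (forall w, `|f w| <= B) -> P.-integrable setT (EFin \o f).
Proof.
move=> mf fB; apply: measurable_bounded_integrable => //.
  by rewrite (le_lt_trans (probability_le1 _ measurableT)) ?ltry.
rewrite /bounded_near; near=> M => w _ /=; apply: le_trans (fB w) _.
by near: M; apply: nbhs_pinfty_ge; exact: num_real.
Unshelve. all: end_near. Qed.

Lemma integral_Rintegral (f : T -> R) : P.-integrable setT (EFin \o f) ->
  (\int[P]_w (f w)%:E = (\int[P]_w f w)%:E)%E.
Proof. by move=> fi; rewrite /Rintegral fineK //; exact: integrable_fin_num. Qed.

Lemma expectation_Rintegral (f : T -> R) : P.-integrable setT (EFin \o f) ->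
  ('E_P[f] = (\int[P]_w f w)%:E)%E.
Proof. by move=> fi; rewrite unlock integral_Rintegral. Qed.

Lemma Lfun2_integrable_norm_sqr (X : T -> R) al be ga : X \in Lfun P 2%:E ->
  P.-integrable setT (EFin \o (fun w => al * `|X w| + be * X w ^+ 2 + ga)).
Proof.
move=> X2.
have X1 : X \in Lfun P 1 by exact: (Lfun_subset12 (fin_num_measure _ _ _)).
have iX : P.-integrable setT (EFin \o (Num.norm \o X)).
  by apply: integrable_norm; exact/Lfun1_integrable.
have iX2 := Lfun2_integrable_sqr X2.
have -> : EFin \o (fun w => al * `|X w| + be * X w ^+ 2 + ga) =
    ((fun w => al%:E * (EFin \o (Num.norm \o X)) w) \+
     (fun w => be%:E * (EFin \o (fun w => (X w ^+ 2)%R)) w) \+ (EFin \o cst ga))%E.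
  by apply/funext => w /=; rewrite !EFinD !EFinM.
apply: integrableD => //; last exact: finite_measure_integrable_cst.
by apply: integrableD => //; exact: integrableZl.
Qed.

Lemma integrable_explin_slope (Y : T -> R) t a : measurable_fun setT Y -> 0 <= t ->
  P.-integrable setT (EFin \o (explin_slope t a \o Y)).
Proof.
move=> mY t0; apply: (integrable_norm_le_cst _ (t * expR (t * a))).
  exact: measurableT_comp (measurable_explin_slope t a) mY.
by move=> w; rewrite /= ger0_norm ?explin_slope_le // mulr_ge0 ?expR_ge0.
Qed.

End integrability.

Section truncated_mgf.
Context {R : realType} {d : measure_display} {T : measurableType d}
  (P : probability T R) (X : {RV P >-> R}) (a : R).

Definition trunc_exp (t : R) (w : T) : R := expR (t * Num.min (X w) a).
Definition trunc_mgf (t : R) : R := \int[P]_w trunc_exp t w.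

Lemma measurable_trunc_exp t : measurable_fun setT (trunc_exp t).
Proof. exact: measurableT_comp (measurable_expR_min t a) _. Qed.

Lemma trunc_exp_le t w : 0 <= t -> trunc_exp t w <= expR (t * a).
Proof. by move=> t0; rewrite ler_expR ler_wpM2l // ge_min lexx orbT. Qed.

Lemma integrable_trunc_exp t : 0 <= t -> P.-integrable setT (EFin \o trunc_exp t).
Proof.
move=> t0; apply: (integrable_norm_le_cst P _ (expR (t * a))).
  exact: measurable_trunc_exp.
by move=> w; rewrite ger0_norm ?expR_ge0 ?trunc_exp_le.
Qed.

Lemma trunc_mgf_ge0 t : 0 <= trunc_mgf t.
Proof. by apply: Rintegral_ge0 => w _; exact: expR_ge0. Qed.

Lemma trunc_mgf_le t u : 0 <= a -> 0 <= t <= u ->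
  trunc_mgf t <= 1 + t * (a * expR (u * a)).
Proof.
move=> a0 /andP[t0 tu].
have C0 : 0 <= t * (a * expR (u * a)) by rewrite !mulr_ge0 ?expR_ge0.
apply: (@le_trans _ _ (\int[P]_w (1 + t * (a * expR (u * a))))); last first.
  by rewrite Rintegral_cst // [fine _]/= probability_setT /= mulr1.
apply: le_Rintegral => //;
  [exact: integrable_trunc_exp | exact: finite_measure_integrable_cst |].
move=> w _; rewrite /trunc_exp; set m := Num.min (X w) a.
have [m0|m0] := leP 0 m; last first.
  have : expR (t * m) <= 1 by rewrite expR_le1 mulr_ge0_le0 // ltW.
  lra.
have [_] := expR_secant t _ _ m0; rewrite mulr0 expR0 subr0.
have : t * expR (t * m) * m <= t * (a * expR (u * a)).
  rewrite -mulrA ler_wpM2l // mulrC; apply: ler_pM; rewrite ?expR_ge0 //.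
    by rewrite ge_min lexx orbT.
  by rewrite ler_expR; apply: ler_pM => //; rewrite ge_min lexx orbT.
lra.
Qed.

Lemma chernoff_trunc_mgf t : 0 <= t ->
  (P [set w | (a <= X w)%R] <= (trunc_mgf t * expR (- (t * a)))%:E)%E.
Proof.
move=> t0.
have mA : measurable [set w | a <= X w].
  by rewrite -[X in measurable X]setTI; apply: measurable_fun_le.
have ie := integrable_trunc_exp _ t0.
rewrite -(setIT [set w | a <= X w]) -integral_indic //.
have ie' : P.-integrable setT (EFin \o (fun w => trunc_exp t w * expR (- (t * a)))).
  rewrite (_ : EFin \o _ = (EFin \o trunc_exp t) \* cst (expR (- (t * a)))%:E)%E.
    exact: integrableZr.
  by apply/funext => w /=; rewrite EFinM.
rewrite /trunc_mgf -RintegralZr // -integral_Rintegral //.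
apply: ge0_le_integral => //.
- by apply/measurable_EFinP; exact: measurable_indic.
- by apply/measurable_EFinP; apply: measurable_funM => //; exact: measurable_trunc_exp.
move=> w _; rewrite lee_fin /trunc_exp /indic /=.
case: (boolP (w \in [set w | a <= X w])) => [|_]; last by rewrite mulr_ge0 ?expR_ge0.
by rewrite inE /= => aX; rewrite (min_r aX) -expRD addrN expR0.
Qed.

Hypothesis X1 : P.-integrable setT (EFin \o X).
Hypothesis a0 : 0 <= a.

Lemma partial1_trunc_exp (t : R) (w : T) :
  partial1of2 trunc_exp t w = Num.min (X w) a * trunc_exp t w.
Proof. by rewrite partial1of2E; have [_ ->] := is_derive_expR_mulr (Num.min (X w) a) t. Qed.

Lemma is_derive_trunc_mgf (t : R) : 0 < t ->
  is_derive t 1 trunc_mgf (\int[P]_w (Num.min (X w) a * trunc_exp t w)).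
Proof.
move=> t0; set v := t + 1; set G := fun w => `|X w| + a * expR (v * a).
have tI : `]0, v[%classic t by rewrite /= in_itv /= t0 /v ltrDl ltr01.
have intf s : `]0, v[%classic s -> P.-integrable setT (EFin \o trunc_exp s).
  by rewrite /= in_itv /= => /andP[s0 _]; exact/integrable_trunc_exp/ltW.
have derf s w : `]0, v[%classic s -> setT w -> derivable (trunc_exp ^~ w) s 1.
  by move=> _ _; have [] := is_derive_expR_mulr (Num.min (X w) a) s.
have G0 w : 0 <= G w by rewrite addr_ge0 ?mulr_ge0 ?expR_ge0.
have intG : P.-integrable setT (EFin \o G).
  rewrite (_ : EFin \o G = (EFin \o (Num.norm \o X)) \+ (EFin \o cst (a * expR (v * a))%R))%E.
    apply: integrableD => //; first exact: integrable_norm.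
    exact: finite_measure_integrable_cst.
  by apply/funext => w; rewrite /= EFinD.
have G_ub s w : `]0, v[%classic s -> setT w -> `|partial1of2 trunc_exp s w| <= G w.
  rewrite /= in_itv /= => /andP[s0 sv] _; rewrite partial1_trunc_exp /trunc_exp /G.
  set m := Num.min (X w) a; have e0 := expR_gt0 (s * m).
  have [m0|m0] := leP 0 m.
    have ma : m <= a by rewrite ge_min lexx orbT.
    have esm : expR (s * m) <= expR (v * a).
      by rewrite ler_expR; apply: ler_pM => //; exact: ltW.
    have : m * expR (s * m) <= a * expR (v * a) by apply: ler_pM => //; exact: ltW.
    rewrite ger0_norm; last by rewrite mulr_ge0 ?expR_ge0.
    by have := normr_ge0 (X w); lra.
  have mX : m = X w.
    by apply: min_l; move: m0; rewrite gt_min (ltNge a) a0 orbF => /ltW/le_trans; apply.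
  have : expR (s * m) <= 1 by rewrite expR_le1 mulr_ge0_le0 // ltW.
  rewrite normrM (ger0_norm (ltW e0)) -mX.
  have := mulr_ge0 a0 (expR_ge0 (v * a)); have := normr_ge0 m; nra.
apply: DeriveDef.
  exact: (derivable_under_integral measurableT tI intf derf G0 intG G_ub).
rewrite -derive1E (differentiation_under_integral measurableT tI intf derf G0 intG G_ub).
by apply: eq_Rintegral => w _; rewrite partial1_trunc_exp.
Qed.

End truncated_mgf.

Section zero_bias_bound.
Context {R : realType} {d d' : measure_display} {T : measurableType d}
  {T' : measurableType d'} {P : probability T R} {P' : probability T' R}
  {X : {RV P >-> R}} {Xs : {RV P' >-> R}} {sigma k c a : R}.
Hypothesis X2 : (X : T -> R) \in Lfun P 2%:E.
Hypothesis a0 : 0 <= a.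

Lemma integrable_min_trunc_exp t : 0 <= t ->
  P.-integrable setT (EFin \o (fun w => Num.min (X w) a * trunc_exp P X a t w)).
Proof.
move=> t0.
apply: le_integrable
  (Lfun2_integrable_norm_sqr _ _ (expR (t * a)) 0 (a * expR (t * a)) X2) => //.
  apply/measurable_EFinP; apply: measurable_funM; last exact: measurable_trunc_exp.
  exact: measurable_minr.
move=> w _ /=; rewrite lee_fin mul0r addr0 normrM.
rewrite [leRHS]ger0_norm; last by rewrite addr_ge0 ?mulr_ge0 ?expR_ge0.
rewrite (ger0_norm (expR_ge0 _)).
have mX : `|Num.min (X w) a| <= `|X w| + a.
  by case: (leP (X w) a) => Xa; [rewrite lerDl | rewrite ger0_norm // lerDr].
have := ler_pM (normr_ge0 _) (expR_ge0 _) mX (trunc_exp_le P X a t w t0).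
by rewrite mulrDl (mulrC `|X w|); lra.
Qed.

Lemma integrable_mul_explin t : 0 <= t ->
  P.-integrable setT (EFin \o (fun w => X w * explin t a (X w))).
Proof.
move=> t0.
apply: le_integrable
  (Lfun2_integrable_norm_sqr _ _ (expR (t * a)) (t * expR (t * a)) 0 X2) => //.
  apply/measurable_EFinP; apply: measurable_funM => //.
  exact: measurableT_comp (measurable_explin t a) _.
move=> w _ /=; rewrite lee_fin addr0 normrM (ger0_norm (explin_ge0 t a (X w) t0)).
rewrite [leRHS]ger0_norm; last first.
  exact: addr_ge0 (mulr_ge0 (expR_ge0 _) (normr_ge0 _))
                  (mulr_ge0 (mulr_ge0 t0 (expR_ge0 _)) (sqr_ge0 _)).
have := ler_wpM2l (normr_ge0 (X w)) (explin_le t a (X w) t0 a0).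
have -> : `|X w| * (expR (t * a) * (1 + t * `|X w|)) =
    expR (t * a) * `|X w| + t * expR (t * a) * `|X w| ^+ 2 by ring.
by rewrite real_normK ?num_real.
Qed.

Hypothesis ZB : zero_bias P X sigma P' Xs.
Hypothesis WL : weighted_le P' Xs P (fun w => X w + c) sigma k.
Hypothesis c0 : 0 <= c.

Lemma derive_trunc_mgf_le t : 0 < t ->
  \int[P]_w (Num.min (X w) a * trunc_exp P X a t w) <=
    k ^+ 2 * (t * expR (t * c)) * trunc_mgf P X a t.
Proof.
move=> t_gt0; have t0 := ltW t_gt0.
have iF := integrable_mul_explin _ t0.
have dXs : (fun w => derive1 (explin t a) (Xs w)) = explin_slope t a \o Xs.
  by apply/funext => w; exact: derive1_explin.
have iXs : P'.-integrable setT (EFin \o (explin_slope t a \o Xs)).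
  exact: integrable_explin_slope.
have iXc : P.-integrable setT (EFin \o (explin_slope t a \o (fun w => X w + c))).
  by apply: integrable_explin_slope => //; exact: measurable_funD.
have zb : \int[P]_w (X w * explin t a (X w)) =
    sigma ^+ 2 * \int[P']_w explin_slope t a (Xs w).
  have := ZB _ (explin_abs_continuous _ a t_gt0) iF; rewrite dXs => /(_ iXs).
  rewrite (expectation_Rintegral _ _ iF) (expectation_Rintegral _ _ iXs) -EFinM.
  by move=> E; apply: EFin_inj; exact: E.
have wl : sigma ^+ 2 * \int[P']_w explin_slope t a (Xs w) <=
    k ^+ 2 * \int[P]_w explin_slope t a (X w + c).
  have := WL _ (explin_slope_homo t a t0) (fun y => explin_slope_gt0 t a y t_gt0) iXs iXc.
  by rewrite (expectation_Rintegral _ _ iXs) (expectation_Rintegral _ _ iXc) -!EFinM lee_fin.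
have sh : \int[P]_w explin_slope t a (X w + c) <= t * expR (t * c) * trunc_mgf P X a t.
  have ie := integrable_trunc_exp P X a _ t0.
  rewrite /trunc_mgf -(RintegralZl _ measurableT ie).
  apply: le_Rintegral => //; last by move=> w _; exact: explin_slope_shift.
  rewrite (_ : EFin \o _ = (fun w => (t * expR (t * c))%:E * (EFin \o trunc_exp P X a t) w)%E).
    exact: integrableZl.
  by apply/funext => w /=; rewrite EFinM.
apply: le_trans (_ : _ <= \int[P]_w (X w * explin t a (X w))) _.
  apply: le_Rintegral => //; first exact: integrable_min_trunc_exp.
  by move=> w _; exact: min_expR_le_explin.
rewrite zb (le_trans wl) // -mulrA ler_wpM2l ?sqr_ge0 //.
Qed.

Lemma trunc_mgf_le_expR ts L : 0 < ts ->
  (forall t, 0 < t -> t <= ts -> k ^+ 2 * expR (t * c) <= L) ->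
  trunc_mgf P X a ts <= expR (L * ts ^+ 2 / 2).
Proof.
move=> ts0 kL.
have L0 : 0 <= L by apply: le_trans (kL ts ts0 (lexx ts)); rewrite mulr_ge0 ?sqr_ge0 ?expR_ge0.
have X1 : P.-integrable setT (EFin \o X).
  by apply/Lfun1_integrable; exact: (Lfun_subset12 (fin_num_measure _ _ _)).
apply: (gronwall_le_expR_sqr _ _ (a * expR (ts * a))) => // [s s0 sts|s s0 sts|s s0 sts].
- by have [] := is_derive_trunc_mgf _ _ _ X1 a0 _ s0.
- rewrite derive1E; have [_ ->] := is_derive_trunc_mgf _ _ _ X1 a0 _ s0.
  apply: (le_trans (derive_trunc_mgf_le _ s0)).
  rewrite -mulrA mulrCA mulrA ler_wpM2r ?trunc_mgf_ge0 //.
  by have := kL s s0 sts; have := ltW s0; nra.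
- by rewrite trunc_mgf_ge0 trunc_mgf_le // (ltW s0) sts.
Qed.

End zero_bias_bound.

Lemma mul_expR_le_add {R : realType} (b c x t : R) : 0 < b -> 0 <= c -> 0 <= x ->
  0 <= t -> t * (b + c * x) <= x -> b * expR (t * c) <= b + c * x.
Proof.
move=> b0 c0 x0 t0 tL.
have L0 : 0 < b + c * x by rewrite ltr_pwDl ?mulr_ge0.
have e0 := expR_ge0 (t * c).
have e1 : expR (t * c) * (1 - t * c) <= 1.
  have := ler_wpM2l e0 (expR_ge1Dx (- (t * c))).
  by rewrite -expRD addrN expR0.
have bL : b <= (b + c * x) * (1 - t * c).
  by have := ler_wpM2l c0 tL; nra.
have : 0 <= (b + c * x) * (1 - expR (t * c) * (1 - t * c)).
  by rewrite mulr_ge0 ?subr_ge0 // ltW.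
have : 0 <= expR (t * c) * ((b + c * x) * (1 - t * c) - b).
  by rewrite mulr_ge0 ?subr_ge0.
nra.
Qed.

Theorem corollary2p1 (R : realType)
  (d d' : measure_display) (T : measurableType d) (T' : measurableType d')
  (P : probability T R) (P' : probability T' R)
  (X : {RV P >-> R}) (Xs : {RV P' >-> R}) (sigma k c : R) :
  (X : T -> R) \in Lfun P 2 ->
  ('E_P[X] = 0)%E ->
  0 < sigma -> ('V_P[X] = (sigma ^+ 2)%:E)%E ->
  zero_bias P X sigma P' Xs ->
  0 < k -> 0 < c ->
  weighted_le P' Xs P (fun w => X w + c) sigma k ->
  forall x : R, 0 <= x ->
    (P [set w | (x <= X w - fine ('E_P[X])%E)%R] <=
       (expR (- (x ^+ 2 / (2 * (k ^+ 2 + c * x)))))%:E)%E.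
Proof.
move=> X2 EX0 _ _ ZB k0 c0 WL x x0.
rewrite EX0 (_ : [set w | _] = [set w | x <= X w]); last first.
  by apply/seteqP; split => w /=; rewrite subr0.
move: x0; rewrite le0r => /orP[/eqP->|x0].
  rewrite expr0n /= mul0r oppr0 expR0 -[X in P X]setTI probability_le1 //.
  exact: measurable_fun_le.
set L := k ^+ 2 + c * x.
have L0 : 0 < L by rewrite /L; have := exprn_gt0 2 k0; have := mulr_gt0 c0 x0; lra.
have ts0 : 0 < x / L by rewrite divr_gt0.
apply: (le_trans (chernoff_trunc_mgf P X x _ (ltW ts0))); rewrite lee_fin.
have kL t : 0 < t -> t <= x / L -> k ^+ 2 * expR (t * c) <= L.
  move=> t0 tts; apply: mul_expR_le_add (exprn_gt0 2 k0) (ltW c0) (ltW x0) (ltW t0) _.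
  by rewrite -ler_pdivlMr.
have mgf := trunc_mgf_le_expR X2 (ltW x0) ZB WL (ltW c0) _ _ ts0 kL.
apply: (le_trans (ler_wpM2r (expR_ge0 _) mgf)).
rewrite -expRD ler_expR (_ : _ + _ = - (x ^+ 2 / (2 * L))) //.
by field; rewrite gt_eqF.
Qed.
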